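(* For every fixed integer $k\ge1$, \[\lim_{M\to\infty}\frac{\mathrm{opt}_{\mathrm{bs}}(k,M)}{M}=\sup_{M\ge1}\frac{\mathrm{opt}_{\mathrm{bs}}(k,M)}{M}\] (in particular the limit exists).
   Context: Let $F$ be a family of functions from a set $X$ to a set $Y$. Online learning of $F$ is a game between a learner and an adversary: the adversary secretly fixes some $f\in F$ and presents inputs $x_1,x_2,\dots\in X$ one at a time, chosen adaptively; after each input $x_t$ the learner guesses a value for $f(x_t)$. A mistake is an incorrect guess. In the standard model, after each guess the adversary reveals the true value $f(x_t)$; in the bandit model, the adversary only says YES (guess correct) or NO (guess incorrect). $\mathrm{opt}_{\mathrm{std}}(F)$ (resp. $\mathrm{opt}_{\mathrm{bs}}(F)$) is the maximum number of mistakes the learner makes in the standard (resp. bandit) model when both learner and adversary play optimally (the learner minimizing, the adversary maximizing, the adversary's answers required to be consistent with some $f\in F$). For positive integers $k,M$, $\mathrm{opt}_{\mathrm{bs}}(k,M)$ denotes the maximum of $\mathrm{opt}_{\mathrm{bs}}(F)$ over all families $F$ of functions (with arbitrary domain) with codomain $\{0,1,\dots,k-1\}$ and $\mathrm{opt}_{\mathrm{std}}(F)=M$. *)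

From HB Require Import structures.
From mathcomp Require Import all_boot all_order all_algebra.
From mathcomp Require Import all_classical all_reals all_analysis.
Set Implicit Arguments. Unset Strict Implicit. Unset Printing Implicit Defensive.
Import Order.TTheory GRing.Theory Num.Theory.
Local Open Scope classical_set_scope.
Local Open Scope ring_scope.

(* Version space after learning that f x = v, resp. f x <> v. *)
Definition restrict_eq {X Y : Type} (V : set (X -> Y)) (x : X) (v : Y) :
  set (X -> Y) := [set f | V f /\ f x = v].
Definition restrict_neq {X Y : Type} (V : set (X -> Y)) (x : X) (v : Y) :
  set (X -> Y) := [set f | V f /\ f x <> v].

(* forces_std V m : in the standard model, starting from the version space V
   (the set of functions consistent with the answers so far), the adversary
   has a strategy guaranteeing at least m more mistakes of the learner while
   keeping all answers consistent with some function of V.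
   Each round: the adversary picks x, the learner guesses y, the adversary
   reveals a value v (mistake iff v <> y). *)
Inductive forces_std {X Y : Type} : set (X -> Y) -> nat -> Prop :=
| fstd0 V : (exists f, V f) -> forces_std V 0
| fstdS V m :
    (exists x : X, forall y : Y,
        (exists v : Y, v <> y /\ forces_std (restrict_eq V x v) m)
        \/ forces_std (restrict_eq V x y) m.+1) ->
    forces_std V m.+1.

(* forces_bs V m : same in the bandit model; the adversary only answers
   YES (f x = y, no mistake) or NO (f x <> y, a mistake). *)
Inductive forces_bs {X Y : Type} : set (X -> Y) -> nat -> Prop :=
| fbs0 V : (exists f, V f) -> forces_bs V 0
| fbsS V m :
    (exists x : X, forall y : Y,
        forces_bs (restrict_neq V x y) m
        \/ forces_bs (restrict_eq V x y) m.+1) ->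
    forces_bs V m.+1.

(* opt values, in the extended reals (+oo if unbounded, -oo if F is empty). *)
Definition opt_std (R : realType) {X Y : Type} (F : set (X -> Y)) : \bar R :=
  ereal_sup [set (m%:R)%:E | m in [set m : nat | forces_std F m]].
Definition opt_bs (R : realType) {X Y : Type} (F : set (X -> Y)) : \bar R :=
  ereal_sup [set (m%:R)%:E | m in [set m : nat | forces_bs F m]].

Definition opt_bs_kM (R : realType) (k M : nat) : \bar R :=
  ereal_sup [set r : \bar R | exists (X : Type) (F : set (X -> 'I_k)),
      opt_std R F = (M%:R)%:E /\ r = opt_bs R F].

Definition bs_ratio (R : realType) (k M : nat) : \bar R :=
  (opt_bs_kM R k M * ((M%:R)^-1)%:E)%E.

From HB Require Import structures.
From mathcomp Require Import all_boot all_order all_algebra.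
From mathcomp Require Import all_classical all_reals all_analysis.
From mathcomp Require Import lra.
Import Order.TTheory GRing.Theory Num.Theory.
Local Open Scope classical_set_scope.
Local Open Scope ring_scope.

(* Taking the disjoint union of the domains of two families adds their
   standard mistake bounds exactly and their bandit mistake bounds at least
   additively.  So if opt_std F = m and the bandit adversary forces t mistakes
   on F, then for every n, the union of n %/ m copies of F with n %% m padding
   families of standard value 1 (these exist once k >= 2) has standard value n
   and forces (n %/ m) * t bandit mistakes.  Hence opt_bs(k, n) / n is
   eventually above any l < t / m, and so above any l below the supremum,
   while the supremum bounds it from above. *)

Section ForcesStrongInduction.
Context {X Y : Type}.

(* The induction principles generated for forces_std and forces_bs give no
   hypothesis for the recursive occurrences nested under the quantifiers and
   disjunctions of the constructors. *)
Lemma forces_std_strong_ind (P : set (X -> Y) -> nat -> Prop) :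
  (forall V, (exists f, V f) -> P V 0) ->
  (forall V m, (exists x : X, forall y : Y,
      (exists v : Y, v <> y /\
         forces_std (restrict_eq V x v) m /\ P (restrict_eq V x v) m)
      \/ (forces_std (restrict_eq V x y) m.+1 /\ P (restrict_eq V x y) m.+1)) ->
    P V m.+1) ->
  forall V m, forces_std V m -> P V m.
Proof.
move=> H0 HS; fix IH 3 => V m [{}V ne | {}V {}m [x hx]]; first exact: H0.
apply: HS; exists x => y; case: (hx y) => [[v [vy h]] | h].
- by left; exists v; do !split => //; exact: IH.
- by right; split => //; exact: IH.
Qed.

Lemma forces_bs_strong_ind (P : set (X -> Y) -> nat -> Prop) :
  (forall V, (exists f, V f) -> P V 0) ->
  (forall V m, (exists x : X, forall y : Y,
      (forces_bs (restrict_neq V x y) m /\ P (restrict_neq V x y) m)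
      \/ (forces_bs (restrict_eq V x y) m.+1 /\ P (restrict_eq V x y) m.+1)) ->
    P V m.+1) ->
  forall V m, forces_bs V m -> P V m.
Proof.
move=> H0 HS; fix IH 3 => V m [{}V ne | {}V {}m [x hx]]; first exact: H0.
apply: HS; exists x => y; case: (hx y) => h.
- by left; split => //; exact: IH.
- by right; split => //; exact: IH.
Qed.

End ForcesStrongInduction.

Section ForcesStd.
Context {X Y : Type} (y0 : Y).
Implicit Types V : set (X -> Y).

Lemma forces_std_nonempty {V m} : forces_std V m -> exists f, V f.
Proof.
move: V m; apply: forces_std_strong_ind => // V m [x /(_ y0)].
by case=> [[v [_ [_ [f [Vf _]]]]] | [_ [f [Vf _]]]]; exists f.
Qed.

Lemma forces_std_succ_inv V m : forces_std V m.+1 ->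
  exists x : X, forall y : Y,
    (exists v : Y, v <> y /\ forces_std (restrict_eq V x v) m)
    \/ forces_std (restrict_eq V x y) m.+1.
Proof. by move=> H; inversion H. Qed.

Lemma forces_std_pred V m : forces_std V m.+1 -> forces_std V m.
Proof.
suff pred_ok : forall V n, forces_std V n -> forces_std V n.-1 by exact: pred_ok.
apply: forces_std_strong_ind => [{}V ne | {}V [|{}m] [x hx]] /=; first exact: fstd0.
- apply: fstd0; case: (hx y0) => [[v [_ [h _]]] | [h _]];
    by have [f [Vf _]] := forces_std_nonempty h; exists f.
- apply: fstdS; exists x => y.
  by case: (hx y) => [[v [vy [_ h]]] | [_ h]]; [left; exists v | right].
Qed.

Lemma forces_std_le V m j : (j <= m)%N -> forces_std V m -> forces_std V j.
Proof.
move=> /subnK <-; elim: (m - j)%N => // d IH h.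
by apply: IH; apply: forces_std_pred.
Qed.

Lemma forces_std_subsingleton {V m} : (forall f g, V f -> V g -> f = g) ->
  forces_std V m -> m = 0%N.
Proof.
move=> V_sub h; move: V m h V_sub; apply: forces_std_strong_ind => // V m [x hx] V_sub.
have [f0 Vf0] : exists f, V f.
  by case: (hx y0) => [[v [_ [h _]]] | [h _]];
    have [f [Vf _]] := forces_std_nonempty h; exists f.
case: (hx (f0 x)) => [[v [vf0 [h _]]] | [_ IH]].
- have [g [Vg gx]] := forces_std_nonempty h.
  by exfalso; apply: vf0; rewrite -gx (V_sub f0 g).
- by apply: IH => f g [Vf _] [Vg _]; exact: V_sub.
Qed.

End ForcesStd.

Definition sum_family {X1 X2 Y : Type} (V1 : set (X1 -> Y)) (V2 : set (X2 -> Y)) :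
  set (X1 + X2 -> Y) := [set f | V1 (fun a => f (inl a)) /\ V2 (fun b => f (inr b))].

Section SumFamily.
Context {X1 X2 Y : Type} (y0 : Y).
Implicit Types (V : set (X1 -> Y)) (W : set (X2 -> Y)).

Lemma restrict_eq_sum_inl V W x v :
  restrict_eq (sum_family V W) (inl x) v = sum_family (restrict_eq V x v) W.
Proof. by apply/seteqP; split=> f /=; rewrite /sum_family /restrict_eq /=; tauto. Qed.

Lemma restrict_eq_sum_inr V W x v :
  restrict_eq (sum_family V W) (inr x) v = sum_family V (restrict_eq W x v).
Proof. by apply/seteqP; split=> f /=; rewrite /sum_family /restrict_eq /=; tauto. Qed.

Lemma restrict_neq_sum_inl V W x v :
  restrict_neq (sum_family V W) (inl x) v = sum_family (restrict_neq V x v) W.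
Proof. by apply/seteqP; split=> f /=; rewrite /sum_family /restrict_neq /=; tauto. Qed.

Lemma restrict_neq_sum_inr V W x v :
  restrict_neq (sum_family V W) (inr x) v = sum_family V (restrict_neq W x v).
Proof. by apply/seteqP; split=> f /=; rewrite /sum_family /restrict_neq /=; tauto. Qed.

Lemma sum_family_nonempty V W :
  (exists f, V f) -> (exists f, W f) -> exists f, sum_family V W f.
Proof.
move=> [fV VfV] [fW WfW].
by exists (fun s => match s with inl a => fV a | inr b => fW b end).
Qed.

Lemma forces_std_sum V W a b : forces_std V a -> forces_std W b ->
  forces_std (sum_family V W) (a + b).
Proof.
move=> h1; move: V a h1 b W; apply: forces_std_strong_ind.
  move=> V neV b W; rewrite add0n; move: W b.
  apply: forces_std_strong_ind => [W neW | W m [x hx]].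
    by apply: fstd0; apply: sum_family_nonempty.
  apply: fstdS; exists (inr x) => y.
  by case: (hx y) => [[v [vy [_ h]]] | [_ h]]; [left; exists v | right];
    rewrite restrict_eq_sum_inr.
move=> V m [x hx] b W h2; rewrite addSn; apply: fstdS; exists (inl x) => y.
case: (hx y) => [[v [vy [_ h]]] | [_ h]]; [left; exists v | right];
  rewrite restrict_eq_sum_inl; first by split; last exact: h.
by rewrite -addSn; exact: h.
Qed.

Lemma forces_bs_sum V W a b : forces_bs V a -> forces_bs W b ->
  forces_bs (sum_family V W) (a + b).
Proof.
move=> h1; move: V a h1 b W; apply: forces_bs_strong_ind.
  move=> V neV b W; rewrite add0n; move: W b.
  apply: forces_bs_strong_ind => [W neW | W m [x hx]].
    by apply: fbs0; apply: sum_family_nonempty.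
  apply: fbsS; exists (inr x) => y; rewrite restrict_neq_sum_inr restrict_eq_sum_inr.
  by case: (hx y) => [[_ h] | [_ h]]; [left | right].
move=> V m [x hx] b W h2; rewrite addSn; apply: fbsS; exists (inl x) => y.
rewrite restrict_neq_sum_inl restrict_eq_sum_inl.
by case: (hx y) => [[_ h] | [_ h]]; [left; exact: h | right; rewrite -addSn; exact: h].
Qed.

Lemma forces_std_sum_inv V W a b : forces_std (sum_family V W) (a + b).+1 ->
  forces_std V a.+1 \/ forces_std W b.+1.
Proof.
suff split_ok : forall U n, forces_std U n -> forall V W a b,
    U = sum_family V W -> n = (a + b).+1 -> forces_std V a.+1 \/ forces_std W b.+1.
  by move=> h; exact: split_ok h V W a b erefl erefl.
clear V W a b; apply: forces_std_strong_ind => // U n [[x|x] hx] V W a b eU [en]; subst U.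
- have [|notW] := pselect (forces_std W b.+1); [by right | left].
  apply: fstdS; exists x => y; case: (hx y) => [[v [vy [h IH]]] | [_ IH]].
  + left; exists v; split => //; rewrite restrict_eq_sum_inl in h.
    case: a en => [|a] en.
      have [f [Vf _]] := forces_std_nonempty y0 h.
      by apply: fstd0; exists (fun a => f (inl a)).
    by case: (IH _ _ a b (restrict_eq_sum_inl V W x v) (etrans en (addSn a b))).
  + by right; case: (IH _ _ a b (restrict_eq_sum_inl V W x y) (congr1 succn en)).
- have [|notV] := pselect (forces_std V a.+1); [by left | right].
  apply: fstdS; exists x => y; case: (hx y) => [[v [vy [h IH]]] | [_ IH]].
  + left; exists v; split => //; rewrite restrict_eq_sum_inr in h.
    case: b en => [|b] en.
      have [f [_ Wf]] := forces_std_nonempty y0 h.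
      by apply: fstd0; exists (fun b => f (inr b)).
    by case: (IH _ _ a b (restrict_eq_sum_inr V W x v) (etrans en (addnS a b))).
  + by right; case: (IH _ _ a b (restrict_eq_sum_inr V W x y) (congr1 succn en)).
Qed.

End SumFamily.

Lemma ereal_sup_nat_eqP (R : realType) (S : set nat) n :
  (forall m j, (j <= m)%N -> S m -> S j) ->
  ereal_sup [set (m%:R)%:E | m in S] = (n%:R)%:E :> \bar R <-> S n /\ ~ S n.+1.
Proof.
move=> S_down; split => [supS | [Sn notSn1]].
- have notSn1 : ~ S n.+1.
    move=> Sn1; have : ((n.+1)%:R%:E <= ereal_sup [set (m%:R)%:E | m in S] :> \bar R)%E.
      by apply: ereal_sup_ubound; exists n.+1.
    by rewrite supS lee_fin ler_nat ltnn.
  split => //; have [//|notSn] := pselect (S n).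
  have : (ereal_sup [set (m%:R)%:E | m in S] <= (n%:R - 1)%:E :> \bar R)%E.
    apply: ge_ereal_sup => _ [m Sm <-]; rewrite lee_fin.
    have : (m < n)%N by rewrite ltnNge; apply/negP => /S_down/(_ Sm).
    by rewrite -(ler_nat R) -natr1; lra.
  by rewrite supS lee_fin; lra.
- apply/eqP; rewrite eq_le; apply/andP; split; last by apply: ereal_sup_ubound; exists n.
  apply: ge_ereal_sup => _ [m Sm <-]; rewrite lee_fin ler_nat leqNgt.
  by apply/negP => /S_down/(_ Sm).
Qed.

Section OptStd.
Context (R : realType).

Lemma opt_std_natP {X Y : Type} (y0 : Y) (V : set (X -> Y)) n :
  opt_std R V = (n%:R)%:E <-> forces_std V n /\ ~ forces_std V n.+1.
Proof. by apply: ereal_sup_nat_eqP => m j; apply: forces_std_le. Qed.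

Lemma opt_std_sum {X1 X2 Y : Type} (y0 : Y)
    {V : set (X1 -> Y)} {W : set (X2 -> Y)} {a b} :
  opt_std R V = (a%:R)%:E -> opt_std R W = (b%:R)%:E ->
  opt_std R (sum_family V W) = ((a + b)%:R)%:E.
Proof.
move=> /(opt_std_natP y0) [Va notVa1] /(opt_std_natP y0) [Wb notWb1].
apply/(opt_std_natP y0); split; first exact: forces_std_sum.
by case/(forces_std_sum_inv y0).
Qed.

Lemma exists_family_opt_std {Y : Type} {a b : Y} : a <> b ->
  forall r, exists (X : Type) (F : set (X -> Y)), opt_std R F = (r%:R)%:E.
Proof.
move=> ab.
have unit_sub (V : set (unit -> Y)) v f g :
    restrict_eq V tt v f -> restrict_eq V tt v g -> f = g.
  by move=> [_ fv] [_ gv]; apply: funext => -[]; rewrite fv gv.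
have opt_full : opt_std R [set: unit -> Y] = (1%:R)%:E.
  apply/(opt_std_natP a); split.
    apply: fstdS; exists tt => y; left.
    have [v vy] : exists v, v <> y.
      by have [->|ya] := pselect (y = a); [exists b => /esym | exists a => /esym].
    by exists v; split => //; apply: fstd0; exists (fun _ => v).
  case/(forces_std_succ_inv) => -[] /(_ a).
  by case=> [[v [_ /(forces_std_subsingleton a (unit_sub _ v))]] |
             /(forces_std_subsingleton a (unit_sub _ a))].
elim => [|r [X [F optF]]].
  exists unit, [set fun _ => a]; apply/(opt_std_natP a); split.
    by apply: fstd0; exists (fun _ => a).
  by move/(forces_std_subsingleton a (fun f g fa ga => etrans fa (esym ga))).
exists (X + unit)%type, (sum_family F [set: unit -> Y]).
by rewrite (opt_std_sum a optF opt_full) addn1.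
Qed.

End OptStd.

Section OptBs.
Context (R : realType).

Lemma exists_family_copies {X Y : Type} {a b : Y} {F : set (X -> Y)} {m t} :
  a <> b -> opt_std R F = (m%:R)%:E -> forces_bs F t -> forall q r,
  exists (X' : Type) (G : set (X' -> Y)),
    opt_std R G = ((q * m + r)%:R)%:E /\ forces_bs G (q * t).
Proof.
move=> ab optF Ft q r; elim: q => [|q [X' [G [optG Gqt]]]].
  have [X' [G optG]] := exists_family_opt_std R ab r.
  exists X', G; split; first by rewrite mul0n add0n.
  have [Gr _] := (opt_std_natP R a G r).1 optG.
  by rewrite mul0n; apply: fbs0; exact: (forces_std_nonempty a Gr).
exists (X' + X)%type, (sum_family G F); split.
  by rewrite (opt_std_sum R a optG optF) mulSn addnAC [(q * m + m)%N]addnC.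
by rewrite mulSn addnC; apply: forces_bs_sum.
Qed.

Lemma opt_bs_kM_ge_divn {k} {X : Type} {F : set (X -> 'I_k)} {m t} n :
  (1 < k)%N -> opt_std R F = (m%:R)%:E -> forces_bs F t ->
  (((n %/ m * t)%:R)%:E <= opt_bs_kM R k n)%E.
Proof.
move=> k_gt1 optF Ft.
have ab : Ordinal (ltnW k_gt1) <> Ordinal k_gt1 by move/(congr1 val).
have [X' [G [optG Gt]]] := exists_family_copies ab optF Ft (n %/ m) (n %% m).
rewrite -divn_eq in optG.
apply: (@le_trans _ _ (opt_bs R G)).
  by apply: ereal_sup_ubound; exists (n %/ m * t)%N.
by apply: ereal_sup_ubound; exists X', G.
Qed.

End OptBs.

Lemma forces_std_ord_gt1 k (X : Type) (F : set (X -> 'I_k)) m :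
  (0 < k)%N -> forces_std F m.+1 -> (1 < k)%N.
Proof.
move=> k_gt0 Fm; rewrite ltnNge; apply/negP => k_le1.
have ord0_val (i : 'I_k) : val i = 0%N.
  by apply/eqP; rewrite -leqn0 -ltnS (leq_trans (ltn_ord i) k_le1).
have ord_eq (i j : 'I_k) : i = j by apply: val_inj; rewrite !ord0_val.
have fun_eq (f g : X -> 'I_k) : F f -> F g -> f = g.
  by move=> _ _; apply: funext => x; exact: ord_eq.
by have := forces_std_subsingleton (Ordinal k_gt0) fun_eq Fm.
Qed.

Lemma divn_mul_eventually_gt {R : realType} {m t : nat} {l : R} :
  (0 < m)%N -> l * m%:R < t%:R -> \forall n \near \oo, l * n%:R < (n %/ m * t)%:R.
Proof.
move=> m_gt0 hlt; have mR_gt0 : 0 < m%:R :> R by rewrite ltr0n.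
have d_gt0 : 0 < t%:R - l * m%:R by rewrite subr_gt0.
near=> n.
have hn : m%:R * t%:R < n%:R * (t%:R - l * m%:R).
  rewrite -ltr_pdivrMr //; near: n; exact: nbhs_infty_gtr.
have hq : n%:R - m%:R + 1 <= (n %/ m * m)%:R :> R.
  have : ((n %% m).+1 <= m)%N by rewrite ltn_pmod.
  rewrite -(ler_nat R) -natr1 {2}(divn_eq n m) natrD; lra.
have ht : (n%:R - m%:R + 1) * t%:R <= (n %/ m * m)%:R * t%:R :> R.
  by rewrite ler_wpM2r.
have -> : (n %/ m * t)%:R = (n %/ m * m)%:R * t%:R / m%:R :> R.
  by rewrite !natrM mulrAC mulfK // gt_eqF.
rewrite ltr_pdivlMr //; have := ler0n R t; lra.
Unshelve. all: by end_near.
Qed.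

Lemma cvge_from_below (R : realType) (u : nat -> \bar R) (L : \bar R) :
  (\forall n \near \oo, (u n <= L)%E) ->
  (forall l : R, (l%:E < L)%E -> \forall n \near \oo, (l%:E < u n)%E) ->
  u @ \oo --> L.
Proof.
case: L => [r| |] u_le u_gt.
- apply/fine_cvgP; split.
    apply: filterS2 u_le (u_gt (r - 1) _) => [n|]; last by rewrite lte_fin; lra.
    by case: (u n).
  apply/cvgrPdist_lt => e e_gt0.
  apply: filterS2 u_le (u_gt (r - e) _) => [n /=|]; last by rewrite lte_fin; lra.
  case: (u n) => //= x; rewrite lee_fin lte_fin => x_le x_gt.
  by rewrite ger0_norm; lra.
- by apply/cvgeyPgt => A; apply: u_gt; exact: ltry.
- apply/cvgeNyPle => A; apply: filterS u_le => n.
  by rewrite leeNy_eq => /eqP ->; exact: leNye.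
Qed.

Theorem mainTheorem5 (R : realType) (k : nat) (hk : (1 <= k)%N) :
  bs_ratio R k @ \oo --> ereal_sup [set bs_ratio R k M | M in [set M : nat | (1 <= M)%N]].
Proof.
apply: cvge_from_below => [|l].
  by apply: filterS (nbhs_infty_ge 1) => n n_ge1; apply: ereal_sup_ubound; exists n.
move=> /ereal_sup_gt [_ [m m_gt0 <-]].
rewrite /bs_ratio lte_pdivlMr ?ltr0n // -EFinM.
move=> /ereal_sup_gt [_ [X [F [optF ->]]]] /ereal_sup_gt [_ [t Ft <-]].
rewrite lte_fin => lm_lt_t.
have k_gt1 : (1 < k)%N.
  case: m m_gt0 optF {lm_lt_t} => // m _ /(opt_std_natP R (Ordinal hk)) [Fm _].
  exact: forces_std_ord_gt1 hk Fm.
apply: filterS2 (divn_mul_eventually_gt m_gt0 lm_lt_t) (nbhs_infty_ge 1) => n ln_lt n_ge1.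
rewrite /bs_ratio lte_pdivlMr ?ltr0n // -EFinM.
by apply: lt_le_trans (opt_bs_kM_ge_divn R n k_gt1 optF Ft); rewrite lte_fin.
Qed.
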